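(* Let $A\in\mathbb{R}^{n\times n}$ be such that $A-I$ is an irreducible singular $M$-matrix, let $v>0$ satisfy $(A^T-I)v=0$, and let $b\in\mathbb{R}^n$ satisfy $v^Tb=0$. Then the equation $Ax-|x|=b$ has infinitely many solutions.
   Context: $|x|$ is the componentwise absolute value. A $Z$-matrix is a real square matrix whose off-diagonal entries are all nonpositive; any $Z$-matrix can be written $sI-B$ with $B\ge 0$ entrywise, and it is a singular $M$-matrix if $s=\rho(B)$, where $\rho$ is spectral radius. A square matrix $M$ is reducible if there is a permutation matrix $P$ with $P^TMP=\begin{bmatrix}M_{11}&M_{12}\\0&M_{22}\end{bmatrix}$ where $M_{11},M_{22}$ are square (nonempty) blocks; it is irreducible otherwise. $v>0$ means all components of $v$ are positive. *)

From HB Require Import structures.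
From mathcomp Require Import all_boot all_order all_algebra perm.
From mathcomp Require Import complex.
Set Implicit Arguments. Unset Strict Implicit. Unset Printing Implicit Defensive.
Import Order.TTheory GRing.Theory Num.Theory.
Local Open Scope ring_scope.

Section Defs.
Variable R : rcfType.

Definition mx_nonneg m p (B : 'M[R]_(m, p)) : Prop := forall i j, 0 <= B i j.

Definition cabs n (x : 'cV[R]_n) : 'cV[R]_n := \col_i `|x i 0|.

Definition cpos n (v : 'cV[R]_n) : Prop := forall i, 0 < v i 0.

Definition ceigen n (B : 'M[R]_n) (l : R[i]) : Prop :=
  eigenvalue (map_mx (fun r : R => Complex r 0) B) l.

Definition is_spectral_radius n (B : 'M[R]_n) (s : R) : Prop :=
  (exists2 l, ceigen B l & `|l| = Complex s 0) /\
  (forall l, ceigen B l -> `|l| <= Complex s 0).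

Definition Zmatrix n (M : 'M[R]_n) : Prop := forall i j, i != j -> M i j <= 0.

Definition singular_Mmatrix n (M : 'M[R]_n) : Prop :=
  exists s (B : 'M[R]_n),
    [/\ mx_nonneg B, M = s%:M - B & is_spectral_radius B s].

(* the permutation matrix P with P^T M P = \matrix_(i,j) M (s i) (s j) *)
Definition reducible n (M : 'M[R]_n) : Prop :=
  exists (s : 'S_n) (k : nat), [/\ (0 < k)%N, (k < n)%N &
    forall i j : 'I_n, (k <= i)%N -> (j < k)%N ->
      ((perm_mx s)^T *m M *m perm_mx s) i j = 0].

Definition irreducible_mx n (M : 'M[R]_n) : Prop := ~ reducible M.
End Defs.

From HB Require Import structures.
From mathcomp Require Import all_boot all_order all_algebra perm.
From mathcomp Require Import complex classical_sets cardinality reals.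
From mathcomp Require Import zify lra.
(* Write A - I = sI - B with B >= 0, so that v > 0 is a left eigenvector of B
   for s.  For any eigenvector w of B for s, B|w| - s|w| is entrywise
   nonnegative and orthogonal to v, hence zero: |w| is again an eigenvector.
   Irreducibility forces a nonnegative eigenvector with one zero entry to
   vanish, so ker (A - I) is spanned by a positive vector u and A - I has rank
   n - 1; its range is then the hyperplane orthogonal to v, which contains b.
   If (A - I) x0 = b, then x = x0 + t u is nonnegative for all large t, and
   such x satisfy Ax - |x| = (A - I) x = b. *)

Set Implicit Arguments. Unset Strict Implicit. Unset Printing Implicit Defensive.
Import Order.TTheory GRing.Theory Num.Theory.
Local Open Scope ring_scope.

Lemma mul_scalar_subr_eq0 (R : pzRingType) n (B : 'M[R]_n) (s : R) (w : 'cV[R]_n) :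
  (s%:M - B) *m w = 0 <-> B *m w = s *: w.
Proof.
rewrite mulmxBl mul_scalar_mx; split=> [/subr0_eq -> // | ->]; exact: subrr.
Qed.

Section CorankOne.
Variables (F : fieldType) (n : nat) (M : 'M[F]_n).

Lemma mulmx_tr_eq0 (w : 'cV[F]_n) : (M *m w = 0) <-> (w^T *m M^T = 0).
Proof. by rewrite -trmx_mul; split=> [-> | /(congr1 trmx)]; rewrite ?trmxK trmx0. Qed.

Lemma ker_neq0_of_left_ker (v : 'cV[F]_n) :
  v != 0 -> v^T *m M = 0 -> exists2 w : 'cV[F]_n, w != 0 & M *m w = 0.
Proof.
move=> v_neq0 vM.
have kerMT_neq0 : kermx M^T != 0.
  rewrite kermx_eq0 /row_free mxrank_tr -/(row_free M) -kermx_eq0.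
  apply: contraNneq v_neq0 => kerM0.
  have : (v^T <= kermx M)%MS by apply/sub_kermxP.
  by rewrite kerM0 submx0 -trmx0 => /eqP/trmx_inj ->.
exists (nz_row (kermx M^T))^T.
  by rewrite -trmx0 (inj_eq trmx_inj) nz_row_eq0.
by apply/mulmx_tr_eq0; rewrite trmxK; apply/sub_kermxP/(submx_trans (nz_row_sub _)).
Qed.

Lemma rank_ge_pred_of_ker_line (u : 'cV[F]_n) :
  (forall w, M *m w = 0 -> exists c, w = c *: u) -> (n <= (\rank M).+1)%N.
Proof.
move=> kerM_line.
have ker_sub : (kermx M^T <= u^T)%MS.
  apply/row_subP => r; have /kerM_line [c rE] : M *m (row r (kermx M^T))^T = 0.
    by apply/mulmx_tr_eq0; rewrite trmxK -row_mul mulmx_ker row0.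
  by rewrite -[row r (kermx M^T)]trmxK rE linearZ; apply/scalemx_sub/submx_refl.
have := leq_trans (mxrankS ker_sub) (rank_leq_row u^T).
rewrite mxrank_ker mxrank_tr; lia.
Qed.

Lemma corank1_solvable (v b : 'cV[F]_n) : v != 0 -> (n <= (\rank M).+1)%N ->
  v^T *m M = 0 -> v^T *m b = 0 -> exists x, M *m x = b.
Proof.
move=> v_neq0 rankM vM vb.
have MT_sub : (M^T <= kermx v)%MS.
  by apply/sub_kermxP; rewrite -[v]trmxK -trmx_mul vM trmx0.
have rank_v : \rank v = 1%N.
  by apply/eqP; rewrite eqn_leq rank_leq_col lt0n mxrank_eq0.
have eq_ker : (kermx v == M^T)%MS.
  rewrite -(mxrank_leqif_sup MT_sub).2 eqn_leq mxrankS // mxrank_ker rank_v mxrank_tr.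
  by rewrite leq_subLR addnC addn1 rankM andbT.
have : (b^T <= M^T)%MS.
  by rewrite -(eqmxP eq_ker); apply/sub_kermxP; rewrite -[v]trmxK -trmx_mul vb trmx0.
by case/submxP=> D bD; exists D^T; rewrite -[M]trmxK -trmx_mul -bD trmxK.
Qed.
End CorankOne.

Section NonnegativeVectors.
Variables (R : rcfType) (n : nat).

Lemma ger0_cabs (x : 'cV[R]_n) : (forall i, 0 <= x i 0) -> cabs x = x.
Proof. by move=> x_ge0; apply/matrixP => i j; rewrite (ord1 j) mxE ger0_norm. Qed.

Lemma cpos_neq0 (v : 'cV[R]_n) (i : 'I_n) : cpos v -> v != 0.
Proof. by move=> v_gt0; apply: contraTneq (v_gt0 i) => ->; rewrite mxE ltxx. Qed.

Lemma cpos_dot_ge0_eq0 (v d : 'cV[R]_n) :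
  cpos v -> (forall i, 0 <= d i 0) -> v^T *m d = 0 -> d = 0.
Proof.
move=> v_gt0 d_ge0 vd.
have vd_ge0 i : xpredT i -> 0 <= v i 0 * d i 0 by move=> _; rewrite mulr_ge0 // ltW.
have vd_sum : \sum_i v i 0 * d i 0 = 0.
  transitivity ((v^T *m d) 0 0); last by rewrite vd mxE.
  by rewrite mxE; apply: eq_bigr => i _; rewrite mxE.
apply/matrixP => i j; rewrite (ord1 j) mxE.
have /eqP := psumr_eq0P vd_ge0 vd_sum (i := i) isT.
by rewrite mulf_eq0 (gt_eqF (v_gt0 i)) => /eqP.
Qed.

Lemma cpos_shift_ge0 (x u : 'cV[R]_n) : cpos u ->
  exists c, forall t i, c <= t -> 0 <= (x + t *: u) i 0.
Proof.
move=> u_gt0; exists (\sum_i `|x i 0| / u i 0) => t i ct; rewrite !mxE.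
have xi_le : `|x i 0| <= t * u i 0.
  rewrite -ler_pdivrMr ?u_gt0 //; apply: (le_trans _ ct).
  rewrite (bigD1 i) //= lerDl; apply: sumr_ge0 => k _.
  by rewrite divr_ge0 // ltW.
have := ler_norm (- x i 0); rewrite normrN; lra.
Qed.
End NonnegativeVectors.

Lemma spectral_radius_dim_gt0 (R : rcfType) n (B : 'M[R]_n) (s : R) :
  is_spectral_radius B s -> (0 < n)%N.
Proof.
case: n B => // B [[l Bl _] _]; move: Bl; rewrite /ceigen /eigenvalue.
by rewrite thinmx0 eqxx.
Qed.

(* Listing the indices in [a] first turns the zero block into the lower-left
   block of the permuted matrix. *)
Lemma reducible_of_zero_block (R : rcfType) n (M : 'M[R]_n) (a : pred 'I_n) :
  (exists i, a i) -> (exists j, ~~ a j) ->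
  (forall i j, ~~ a i -> a j -> M i j = 0) -> reducible M.
Proof.
move=> [i0 ai0] [j0 naj0] M_block.
pose s1 := [seq x <- enum 'I_n | a x]; pose s2 := [seq x <- enum 'I_n | predC a x].
have s12_perm : perm_eq (s1 ++ s2) (ord_tuple n).
  by rewrite val_ord_tuple perm_filterC.
have /tuple_permP[p pE] := s12_perm.
have p_nth (i : 'I_n) : nth i (s1 ++ s2) i = p i.
  by rewrite pE -tnth_nth tnth_mktuple tnth_ord_tuple.
have size_s12 : (size s1 + size s2)%N = n.
  by rewrite -size_cat (perm_size s12_perm) size_tuple.
pose k := size s1.
have p_a (i : 'I_n) : (i < k)%N -> a (p i).
  move=> ik; rewrite -p_nth nth_cat ik.
  by have := mem_nth i ik; rewrite mem_filter => /andP[].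
have p_na (i : 'I_n) : (k <= i)%N -> ~~ a (p i).
  move=> ki; rewrite -p_nth nth_cat ltnNge ki /=.
  have : (i - k < size s2)%N by have := ltn_ord i; rewrite -/k; lia.
  by move/(mem_nth i); rewrite mem_filter => /andP[].
exists p^-1%g, k; split.
- by rewrite /k size_filter -has_count; apply/hasP; exists i0; rewrite ?mem_enum.
- have : (0 < size s2)%N.
    by rewrite /s2 size_filter -has_count; apply/hasP; exists j0; rewrite ?mem_enum.
  rewrite -/k; lia.
- move=> i j ki jk; rewrite tr_perm_mx invgK -row_permE -col_permE !mxE.
  exact: M_block (p_na _ ki) (p_a _ jk).
Qed.

Section IrreducibleNonnegative.
Variables (R : rcfType) (n : nat) (B : 'M[R]_n) (s : R).
Hypotheses (B_ge0 : mx_nonneg B) (irrB : irreducible_mx (s%:M - B)).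

Lemma eigenvector_ge0_eq0 (z : 'cV[R]_n) (j0 : 'I_n) :
  (forall i, 0 <= z i 0) -> B *m z = s *: z -> z j0 0 = 0 -> z = 0.
Proof.
move=> z_ge0 Bz zj0; apply/eqP/negPn/negP => z_neq0; apply: irrB.
apply: (@reducible_of_zero_block _ _ _ (fun i => z i 0 != 0)); last first.
- move=> i j /negPn/eqP zi zj.
  have i_neq_j : i != j by apply: contraNneq zj => <-; rewrite zi.
  have Bz_i : \sum_k B i k * z k 0 = 0.
    by transitivity ((B *m z) i 0); [rewrite mxE | rewrite Bz mxE zi mulr0].
  have Bz_ge0 k : xpredT k -> 0 <= B i k * z k 0 by move=> _; rewrite mulr_ge0.
  have /eqP := psumr_eq0P Bz_ge0 Bz_i (i := j) isT.
  rewrite mulf_eq0 (negbTE zj) orbF !mxE (negbTE i_neq_j) mulr0n sub0r.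
  by move=> /eqP ->; rewrite oppr0.
- by exists j0; rewrite zj0 eqxx.
- apply/existsP; apply: contraNT z_neq0 => /existsPn zz.
  by apply/eqP/matrixP => i j; rewrite (ord1 j) mxE; apply/eqP/negbNE/zz.
Qed.
End IrreducibleNonnegative.

Section PerronFrobenius.
Variables (R : rcfType) (n : nat) (B : 'M[R]_n) (s : R) (v : 'cV[R]_n).
Hypotheses (B_ge0 : mx_nonneg B) (v_gt0 : cpos v) (Bv : B^T *m v = s *: v).

Lemma left_ker_scalar_sub : v^T *m (s%:M - B) = 0.
Proof. by rewrite mulmxBr mul_mx_scalar -[B]trmxK -trmx_mul Bv linearZ /= subrr. Qed.

(* The index [i] only witnesses that n > 0. *)
Lemma left_eigenvalue_ge0 (i : 'I_n) : 0 <= s.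
Proof.
have : 0 <= (B^T *m v) i 0.
  by rewrite mxE; apply: sumr_ge0 => j _; rewrite mxE mulr_ge0 // ltW.
by rewrite Bv mxE pmulr_lge0.
Qed.

(* Entrywise B|w| >= |Bw| = s|w|, and v^T (B|w| - s|w|) = 0 with v > 0. *)
Lemma eigenvector_cabs (w : 'cV[R]_n) : B *m w = s *: w -> B *m cabs w = s *: cabs w.
Proof.
move=> Bw; apply/eqP; rewrite -subr_eq0; apply/eqP; apply: (cpos_dot_ge0_eq0 v_gt0).
- move=> i; rewrite !mxE subr_ge0 -(ger0_norm (left_eigenvalue_ge0 i)) -normrM.
  have -> : s * w i 0 = (B *m w) i 0 by rewrite Bw mxE.
  rewrite mxE; apply: le_trans (ler_norm_sum _ _ _) _; apply: ler_sum => j _.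
  by rewrite normrM (ger0_norm (B_ge0 _ _)) mxE.
- have vB : v^T *m B = s *: v^T by rewrite -[B]trmxK -trmx_mul Bv linearZ.
  by rewrite mulmxBr mulmxA vB -scalemxAl -scalemxAr subrr.
Qed.

Hypothesis irrB : irreducible_mx (s%:M - B).

Lemma ker_entry_eq0 (w : 'cV[R]_n) (j0 : 'I_n) :
  (s%:M - B) *m w = 0 -> w j0 0 = 0 -> w = 0.
Proof.
move=> /mul_scalar_subr_eq0 /eigenvector_cabs Bw wj0.
have : cabs w = 0.
  apply: (eigenvector_ge0_eq0 B_ge0 irrB (j0 := j0)) => //.
  - by move=> i; rewrite mxE.
  - by rewrite mxE wj0 normr0.
move/matrixP=> absw0; apply/matrixP => i j.
by have /eqP := absw0 i j; rewrite !mxE (ord1 j) normr_eq0 => /eqP.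
Qed.

Lemma ker_line (u : 'cV[R]_n) (j0 : 'I_n) : (s%:M - B) *m u = 0 -> u j0 0 != 0 ->
  forall w, (s%:M - B) *m w = 0 -> exists c, w = c *: u.
Proof.
move=> Mu uj0 w Mw; exists (w j0 0 / u j0 0); apply/eqP; rewrite -subr_eq0; apply/eqP.
apply: (ker_entry_eq0 (j0 := j0)).
  by rewrite mulmxBr -scalemxAr Mu scaler0 Mw subrr.
by rewrite !mxE divfK ?subrr.
Qed.

Lemma ker_cpos : (0 < n)%N -> exists2 u, cpos u & (s%:M - B) *m u = 0.
Proof.
move=> n_gt0.
have [w w_neq0 /[dup] Mw /mul_scalar_subr_eq0 /eigenvector_cabs Bw] :=
  ker_neq0_of_left_ker (cpos_neq0 (Ordinal n_gt0) v_gt0) left_ker_scalar_sub.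
exists (cabs w); last exact/mul_scalar_subr_eq0.
move=> i; rewrite mxE normr_gt0; apply: contra_neq w_neq0.
exact: ker_entry_eq0 Mw.
Qed.
End PerronFrobenius.

Lemma infinite_set_inj T (A : set T) (f : nat -> T) :
  injective f -> (forall m, A (f m)) -> infinite_set A.
Proof.
move=> f_inj fA finA; apply: infinite_nat; apply: card_le_finite finA.
apply: (@card_le_trans _ _ _ (f @` setT)%classic).
  by move: (@inj_card_eq _ _ setT f (in2W f_inj)); rewrite card_eq_sym card_eqPle => -[].
by apply: subset_card_le => _ [m _ <-].
Qed.

Theorem proposition4p3 (R : realType) (n : nat) (A : 'M[R]_n) (v b : 'cV[R]_n) :
  singular_Mmatrix (A - 1%:M) ->
  irreducible_mx (A - 1%:M) ->
  cpos v ->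
  (A^T - 1%:M) *m v = 0 ->
  v^T *m b = 0 ->
  infinite_set [set x : 'cV[R]_n | A *m x - cabs x = b].
Proof.
move=> [s [B [B_ge0 AE srB]]] irrA v_gt0 Av vb; rewrite AE in irrA.
(* The spectral radius hypothesis is only needed to rule out n = 0. *)
have n_gt0 := spectral_radius_dim_gt0 srB; pose j0 := Ordinal n_gt0.
have Bv : B^T *m v = s *: v.
  apply/mul_scalar_subr_eq0; rewrite -tr_scalar_mx -linearB /= -AE.
  by rewrite linearB /= tr_scalar_mx Av.
have [u u_gt0 Mu] := ker_cpos B_ge0 v_gt0 Bv irrA n_gt0.
have rankM := rank_ge_pred_of_ker_line
  (ker_line B_ge0 v_gt0 Bv irrA Mu (lt0r_neq0 (u_gt0 j0))).
have [x0 Mx0] := corank1_solvable (cpos_neq0 j0 v_gt0) rankM (left_ker_scalar_sub Bv) vb.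
have [c shift_ge0] := cpos_shift_ge0 x0 u_gt0.
apply: (@infinite_set_inj _ _ (fun m : nat => x0 + (c + m%:R) *: u)).
- move=> m1 m2 /(congr1 (fun x : 'cV[R]_n => x j0 0)); rewrite !mxE.
  move=> /addrI /(mulIf (lt0r_neq0 (u_gt0 j0))) /addrI /eqP.
  by rewrite eqr_nat => /eqP.
- move=> m /=; rewrite ger0_cabs; last by move=> i; apply: shift_ge0; rewrite lerDl.
  rewrite -[X in _ - X]mul1mx -mulmxBl AE mulmxDr -scalemxAr Mu scaler0 addr0.
  exact: Mx0.
Qed.
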